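(* Let $0<\gamma<0.1$ and consider the dataset in $\mathbb{R}^2$: $\mathbf{x}_1=(\gamma,\sqrt{1-\gamma^2})$, $\mathbf{x}_2=(\gamma,-\sqrt{1-\gamma^2}/2)$, $y_1=y_2=1$. Let $L(\mathbf{w})=\frac12\sum_{i=1}^2\ln(1+\exp(-y_i\mathbf{x}_i^\top\mathbf{w}))$ and run gradient descent $\mathbf{w}_t=\mathbf{w}_{t-1}-\eta\nabla L(\mathbf{w}_{t-1})$ with $\mathbf{w}_0=0$ and constant stepsize $\eta>0$. If the sequence $(L(\mathbf{w}_t))_{t\ge0}$ is non-increasing, then $L(\mathbf{w}_t)\ge c_0/t$ for all $t\ge1$, where $c_0>0$ depends only on $\gamma$ (not on $t$ or $\eta$). *)

From Stdlib Require Import Reals Lra.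
Open Scope R_scope.

Definition vec2 := (R * R)%type.
Definition dot (u v : vec2) : R := fst u * fst v + snd u * snd v.

Definition x1 (g : R) : vec2 := (g, sqrt (1 - g ^ 2)).
Definition x2 (g : R) : vec2 := (g, - sqrt (1 - g ^ 2) / 2).
Definition y1 : R := 1.
Definition y2 : R := 1.

Definition ell (z : R) : R := ln (1 + exp (- z)).
Definition ell' (z : R) : R := - / (1 + exp z).

Definition Loss (g : R) (w : vec2) : R :=
  / 2 * (ell (y1 * dot (x1 g) w) + ell (y2 * dot (x2 g) w)).

Definition scal (a : R) (v : vec2) : vec2 := (a * fst v, a * snd v).
Definition vadd (u v : vec2) : vec2 := (fst u + fst v, snd u + snd v).
Definition gradL (g : R) (w : vec2) : vec2 :=
  scal (/ 2) (vadd (scal (ell' (y1 * dot (x1 g) w) * y1) (x1 g))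
                   (scal (ell' (y2 * dot (x2 g) w) * y2) (x2 g))).

Fixpoint gd (g eta : R) (t : nat) : vec2 :=
  match t with
  | O => (0, 0)
  | S t' => let w := gd g eta t' in vadd w (scal (- eta) (gradL g w))
  end.

(* One step of monotonicity already forces [eta <= 40]: the first step moves
   along [x1 + x2], and since [<x2, x1 + x2> = (9 g^2 - 1)/4 < 0] the loss on
   [x2] after it is at least linear in [eta], whereas it must stay below
   [L(0) = ln 2].  Next, [<x1, x2> < 0], so the [x2]-term of every gradient step
   decreases the margin [z = <x1, w>]; hence [z] increases by at most
   [eta / 2 / (1 + exp z)] per step, which makes [exp z] grow at most linearly
   in [t].  Finally [L(w) >= ell(z) / 2 >= 1 / (2 (1 + exp z))]. *)
From Stdlib Require Import Reals Lra.
Open Scope R_scope.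

Lemma exp_le_mono (x y : R) : x <= y -> exp x <= exp y.
Proof.
  intros Hxy; destruct (Req_dec x y) as [<- | Hne]; [lra |].
  apply Rlt_le, exp_increasing; lra.
Qed.

Lemma ln_ge_1_minus_inv (x : R) : 0 < x -> 1 - / x <= ln x.
Proof.
  intros Hx; pose proof (exp_ineq1_le (- ln x)) as H.
  rewrite exp_Ropp, exp_ln in H by exact Hx; lra.
Qed.

Lemma ln_2_lt_1 : ln 2 < 1.
Proof.
  rewrite <- ln_exp with 1; apply ln_increasing; [lra |].
  pose proof (exp_ineq1 1); lra.
Qed.

Lemma exp_le_1_plus_mul_exp (u : R) : 0 <= u -> exp u <= 1 + u * exp u.
Proof.
  intros Hu; pose proof (exp_ineq1_le (- u)) as H.
  rewrite exp_Ropp in H; pose proof (exp_pos u) as Hpos.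
  assert (Hmul : (1 - u) * exp u <= / exp u * exp u) by (apply Rmult_le_compat_r; lra).
  rewrite Rinv_l in Hmul by lra; lra.
Qed.

Lemma ell_ge0 (z : R) : 0 <= ell z.
Proof.
  unfold ell; rewrite <- ln_1; apply Rlt_le, ln_increasing; [lra |].
  pose proof (exp_pos (- z)); lra.
Qed.

Lemma ell_ge_inv (z : R) : / (1 + exp z) <= ell z.
Proof.
  pose proof (exp_pos z); pose proof (exp_pos (- z)).
  unfold ell; eapply Rle_trans; [| apply ln_ge_1_minus_inv; lra].
  rewrite exp_Ropp; apply Req_le; field; lra.
Qed.

Lemma ell_opp_ge (x : R) : x <= ell (- x).
Proof.
  unfold ell; rewrite Ropp_involutive, <- (ln_exp x) at 1.
  apply Rlt_le, ln_increasing; [apply exp_pos |].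
  lra.
Qed.

Lemma Loss_ge_inv (g : R) (w : vec2) : / 2 * / (1 + exp (dot (x1 g) w)) <= Loss g w.
Proof.
  unfold Loss, y1, y2; rewrite !Rmult_1_l.
  pose proof (ell_ge_inv (dot (x1 g) w)); pose proof (ell_ge0 (dot (x2 g) w)); lra.
Qed.

Lemma Loss_ge_x2 (g : R) (w : vec2) : / 2 * ell (dot (x2 g) w) <= Loss g w.
Proof.
  unfold Loss, y1, y2; rewrite !Rmult_1_l.
  pose proof (ell_ge0 (dot (x1 g) w)); lra.
Qed.

Lemma dot_gd_S (g eta : R) (v : vec2) (t : nat) :
  let w := gd g eta t in
  dot v (gd g eta (S t)) =
  dot v w + eta / 2 * (/ (1 + exp (dot (x1 g) w)) * dot v (x1 g)
                       + / (1 + exp (dot (x2 g) w)) * dot v (x2 g)).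
Proof.
  cbn zeta; simpl gd.
  unfold gradL, ell', y1, y2; rewrite !Rmult_1_l, !Rmult_1_r.
  unfold dot, vadd, scal; cbn [fst snd]; unfold Rdiv; ring.
Qed.

Section Gram.

Variable g : R.
Hypothesis g2_le1 : g ^ 2 <= 1.

Let sqrt_sq : sqrt (1 - g ^ 2) * sqrt (1 - g ^ 2) = 1 - g ^ 2.
Proof. apply sqrt_sqrt; lra. Qed.

Lemma dot_x1_x1 : dot (x1 g) (x1 g) = 1.
Proof. unfold dot, x1; cbn [fst snd]; rewrite sqrt_sq; ring. Qed.

Lemma dot_x1_x2 : dot (x1 g) (x2 g) = (3 * g ^ 2 - 1) / 2.
Proof.
  unfold dot, x1, x2; cbn [fst snd].
  transitivity (g * g - sqrt (1 - g ^ 2) * sqrt (1 - g ^ 2) / 2); [field |].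
  rewrite sqrt_sq; field.
Qed.

Lemma dot_x2_x1 : dot (x2 g) (x1 g) = (3 * g ^ 2 - 1) / 2.
Proof. rewrite <- dot_x1_x2; unfold dot; ring. Qed.

Lemma dot_x2_x2 : dot (x2 g) (x2 g) = (3 * g ^ 2 + 1) / 4.
Proof.
  unfold dot, x2; cbn [fst snd].
  transitivity (g * g + sqrt (1 - g ^ 2) * sqrt (1 - g ^ 2) / 4); [field |].
  rewrite sqrt_sq; field.
Qed.

End Gram.

Lemma dot_x2_gd_1 (g eta : R) : g ^ 2 <= 1 ->
  dot (x2 g) (gd g eta 1) = - (eta * (1 - 9 * g ^ 2) / 16).
Proof.
  intros Hg; rewrite (dot_gd_S g eta (x2 g) 0); cbn [gd].
  rewrite dot_x2_x1, dot_x2_x2 by exact Hg.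
  unfold dot; cbn [fst snd]; rewrite !Rmult_0_r, Rplus_0_r, exp_0; field.
Qed.

Lemma stepsize_le_40 (g eta : R) : 0 < g < 1 / 10 -> 0 < eta ->
  Loss g (gd g eta 1) <= Loss g (gd g eta 0) -> eta <= 40.
Proof.
  intros Hg Heta Hdecr.
  assert (Hg2 : g ^ 2 <= 1) by nra.
  assert (HL0 : Loss g (gd g eta 0) = ln 2).
  { unfold Loss, ell, dot, y1, y2; cbn [gd fst snd].
    rewrite !Rmult_0_r, !Rplus_0_r, !Rmult_0_r, Ropp_0, exp_0.
    replace (1 + 1) with 2 by ring; field. }
  pose proof (Loss_ge_x2 g (gd g eta 1)) as Hx2.
  rewrite dot_x2_gd_1 in Hx2 by exact Hg2.
  pose proof (ell_opp_ge (eta * (1 - 9 * g ^ 2) / 16)).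
  pose proof ln_2_lt_1.
  assert (9 / 10 <= 1 - 9 * g ^ 2) by nra.
  nra.
Qed.

Lemma margin_x1_step (g eta : R) (t : nat) : 0 < g < 1 / 10 -> 0 < eta ->
  dot (x1 g) (gd g eta (S t))
  <= dot (x1 g) (gd g eta t) + eta / 2 / (1 + exp (dot (x1 g) (gd g eta t))).
Proof.
  intros Hg Heta.
  assert (Hg2 : g ^ 2 <= 1) by nra.
  rewrite (dot_gd_S g eta (x1 g) t); cbv zeta.
  rewrite dot_x1_x1, dot_x1_x2 by exact Hg2.
  set (z2 := dot (x2 g) (gd g eta t)).
  assert (Hinv : 0 < / (1 + exp z2)) by (apply Rinv_0_lt_compat; pose proof (exp_pos z2); lra).
  assert (0 <= eta * / (1 + exp z2) * (1 - 3 * g ^ 2)) by (apply Rmult_le_pos; nra).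
  unfold Rdiv; nra.
Qed.

Lemma exp_step_le (a z : R) : 0 <= a ->
  exp (z + a / (1 + exp z)) <= exp z + a * exp a.
Proof.
  intros Ha; pose proof (exp_pos z) as Hz.
  set (u := a / (1 + exp z)).
  assert (Hu0 : 0 <= u) by (apply Rmult_le_pos; [lra | apply Rlt_le, Rinv_0_lt_compat; lra]).
  assert (Hu : u * (1 + exp z) = a) by (unfold u; field; lra).
  assert (Hzu : exp z * u <= a) by nra.
  assert (Hua : u <= a) by nra.
  pose proof (exp_le_mono u a Hua) as Heu.
  pose proof (exp_le_1_plus_mul_exp u Hu0) as Hexp.
  rewrite exp_plus.
  assert (exp z * exp u <= exp z * (1 + u * exp u)) by (apply Rmult_le_compat_l; lra).
  assert (exp z * u * exp u <= a * exp a).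
  { apply Rmult_le_compat; [apply Rmult_le_pos; lra | apply Rlt_le, exp_pos | lra | lra]. }
  nra.
Qed.

Lemma exp_seq_le_linear (z : nat -> R) (a : R) : 0 <= a ->
  (forall t, z (S t) <= z t + a / (1 + exp (z t))) ->
  forall t, exp (z t) <= exp (z 0%nat) + a * exp a * INR t.
Proof.
  intros Ha Hstep; induction t as [| t IH]; [simpl; lra |].
  rewrite S_INR.
  pose proof (exp_le_mono _ _ (Hstep t)).
  pose proof (exp_step_le a (z t) Ha); lra.
Qed.

Theorem mainTheorem3 :
  forall gamma : R, 0 < gamma < 1 / 10 ->
  exists c0 : R, 0 < c0 /\
    forall eta : R, 0 < eta ->
      (forall t : nat, Loss gamma (gd gamma eta (S t)) <= Loss gamma (gd gamma eta t)) ->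
      forall t : nat, (1 <= t)%nat -> Loss gamma (gd gamma eta t) >= c0 / INR t.
Proof.
  intros g Hg.
  set (D := 20 * exp 20).
  assert (HD : 0 < D) by (pose proof (exp_pos 20); unfold D; lra).
  exists (/ (2 * (2 + D))); split; [apply Rinv_0_lt_compat; lra |].
  intros eta Heta Hmono t Ht.
  pose proof (stepsize_le_40 g eta Hg Heta (Hmono 0%nat)) as Heta40.
  set (z := fun s => dot (x1 g) (gd g eta s)).
  assert (Hgrowth : exp (z t) <= 1 + D * INR t).
  { assert (HaD : eta / 2 * exp (eta / 2) <= D).
    { pose proof (exp_le_mono (eta / 2) 20 ltac:(lra)).
      unfold D; apply Rmult_le_compat; try lra; apply Rlt_le, exp_pos. }
    assert (Hz0 : exp (z 0%nat) = 1).
    { unfold z, dot; cbn [gd fst snd]; rewrite !Rmult_0_r, Rplus_0_r; apply exp_0. }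
    pose proof (exp_seq_le_linear z (eta / 2) ltac:(lra)
                  (fun s => margin_x1_step g eta s Hg Heta) t).
    pose proof (pos_INR t); nra. }
  assert (Ht1 : 1 <= INR t) by (apply (le_INR 1); exact Ht).
  pose proof (Loss_ge_inv g (gd g eta t)) as HL; fold (z t) in HL.
  assert (/ (2 + D * INR t) <= / (1 + exp (z t))).
  { apply Rinv_le_contravar; [pose proof (exp_pos (z t)); lra | lra]. }
  assert (/ (2 * (2 + D)) / INR t <= / 2 * / (2 + D * INR t)).
  { unfold Rdiv; rewrite <- !Rinv_mult; apply Rinv_le_contravar; nra. }
  lra.
Qed.
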